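(* If $n$ is odd, then $K_n$ can be (smoothly) embedded in $\mathbb{R}^{n+1}$.
   Context: $K_n=(S^1)^n/\bigl((z_1,\ldots,z_{n-1},z_n)\sim(\overline{z}_1,\ldots,\overline{z}_{n-1},-z_n)\bigr)$, where $S^1\subset\mathbb{C}$ is the unit circle and $\overline{z}$ is complex conjugation. *)

From Stdlib Require Import Reals ZArith Arith.
Open Scope R_scope.

(* Points of R^m are represented as functions nat -> R (only the first m
   coordinates matter). A point of the torus (S^1)^n is given by angle
   coordinates theta_0..theta_{n-1}, with z_i = exp(i theta_i). *)
Definition vec := nat -> R.

Definition upd (x : vec) (i : nat) (t : R) : vec :=
  fun k => if Nat.eqb k i then t else x k.

Fixpoint rsum (n : nat) (f : nat -> R) : R :=
  match n with
  | O => 0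
  | S m => rsum m f + f m
  end.

Definition dep_first (n : nat) (f : vec -> R) : Prop :=
  forall x y : vec, (forall i, (i < n)%nat -> x i = y i) -> f x = f y.

Definition cont_n (n : nat) (f : vec -> R) : Prop :=
  forall (x : vec) (eps : R), 0 < eps ->
    exists delta, 0 < delta /\
      forall y : vec, (forall i, (i < n)%nat -> Rabs (y i - x i) < delta) ->
        Rabs (f y - f x) < eps.

Fixpoint Ck (n k : nat) (f : vec -> R) : Prop :=
  match k with
  | O => cont_n n f
  | S k' => cont_n n f /\
      forall i, (i < n)%nat ->
        exists g : vec -> R,
          (forall x : vec, derivable_pt_lim (fun t => f (upd x i t)) (x i) (g x))
          /\ Ck n k' g
  end.

Definition smooth_n (n : nat) (f : vec -> R) : Prop :=
  dep_first n f /\ forall k, Ck n k f.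

Definition same_angle (a b : R) : Prop :=
  exists k : Z, b = a + 2 * PI * IZR k.

(* The equivalence relation on R^n whose quotient is K_n:
   theta ~ theta' iff they give the same point of (S^1)^n, or
   theta' gives (conj z_1, ..., conj z_{n-1}, - z_n) where z = point of theta. *)
Definition K_equiv (n : nat) (x y : vec) : Prop :=
  (forall i, (i < n)%nat -> same_angle (x i) (y i)) \/
  ((forall i, (i < n - 1)%nat -> same_angle (- x i) (y i)) /\
   same_angle (x (n - 1)%nat + PI) (y (n - 1)%nat)).

(* F (in angle coordinates) induces a smooth embedding K_n -> R^(n+1):
   smooth lift, constant on classes (well defined on K_n), injective on K_n,
   and an immersion (Jacobian of rank n).  Since K_n is compact, an injective
   immersion is a smooth embedding. *)
Definition smooth_embedding_K (n : nat) (F : vec -> vec) : Prop :=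
  (forall j, (j < n + 1)%nat -> smooth_n n (fun x => F x j)) /\
  (forall x y : vec, K_equiv n x y -> forall j, (j < n + 1)%nat -> F x j = F y j) /\
  (forall x y : vec, (forall j, (j < n + 1)%nat -> F x j = F y j) -> K_equiv n x y) /\
  (forall (x : vec) (D : nat -> nat -> R),
     (forall j i, (j < n + 1)%nat -> (i < n)%nat ->
        derivable_pt_lim (fun t => F (upd x i t) j) (x i) (D j i)) ->
     forall c : nat -> R,
       (forall j, (j < n + 1)%nat -> rsum n (fun i => c i * D j i) = 0) ->
       forall i, (i < n)%nat -> c i = 0).

From Stdlib Require Import Reals ZArith Arith.
From Stdlib Require Import Lia Psatz FunctionalExtensionality.
Open Scope R_scope.

(** Write n = 2h + 1, m = 2h, and θ = x_m for the last angle.  The first m angles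
    go through the standard nested embedding of the torus T^m: radii r_0 = 1,
    r_(k+1) = 2 + r_k cos x_k / 3, which stay in [1, 3], and heights
    s_k = r_k sin x_k; from r_(k+1) and s_k one recovers r_k and x_k, so
    (r_m, s_0, ..., s_(m-1)) determines x_0, ..., x_(m-1).  Viewing R^(n+1) as
    C^(h+1), the embedding is
      x |-> (r_m e^(2iθ), e^(iθ) (s_0 + i s_1), ..., e^(iθ) (s_(m-2) + i s_(m-1))).
    Conjugating z_1, ..., z_m negates every s_k, and θ |-> θ + π negates e^(iθ)
    while fixing e^(2iθ); since m is even the heights come in pairs, so the map
    is constant on the classes of K_n.  Conversely, equal images give equal
    e^(2iθ), so θ' = θ or θ + π, and then all heights agree up to that same
    sign, which pins down the class.  For the immersion, a direction c killing
    the differential must kill the derivative of r_m e^(2iθ), which forces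
    c_m = 0, and then the derivatives of all r_k and s_k, which forces
    c_k = 0 by descending along the radii. *)

Lemma cos_sin_add_2PI_Z (a : R) (k : Z) :
  cos (a + 2 * PI * IZR k) = cos a /\ sin (a + 2 * PI * IZR k) = sin a.
Proof.
  assert (Hnat : forall (b : R) (p : nat),
             cos (b + 2 * PI * INR p) = cos b /\ sin (b + 2 * PI * INR p) = sin b).
  { intros b p. replace (b + 2 * PI * INR p) with (b + 2 * INR p * PI) by ring.
    split; [apply cos_period | apply sin_period]. }
  destruct (Z_le_gt_dec 0 k) as [Hk | Hk].
  - rewrite <- (Z2Nat.id k Hk), <- INR_IZR_INZ. apply Hnat.
  - replace k with (- Z.of_nat (Z.to_nat (- k)))%Z by lia.
    rewrite opp_IZR, <- INR_IZR_INZ.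
    destruct (Hnat (a + 2 * PI * - INR (Z.to_nat (- k))) (Z.to_nat (- k))) as [Hc Hs].
    replace (a + 2 * PI * - INR (Z.to_nat (- k)) + 2 * PI * INR (Z.to_nat (- k)))
      with a in Hc, Hs by ring.
    split; symmetry; assumption.
Qed.

Lemma same_angle_iff (a b : R) : same_angle a b <-> cos b = cos a /\ sin b = sin a.
Proof.
  split.
  - intros [k ->]. apply cos_sin_add_2PI_Z.
  - intros [Hc Hs].
    assert (Hsin : sin (b - a) = 0) by (rewrite sin_minus, Hc, Hs; ring).
    assert (Hcos : cos (b - a) = 1).
    { rewrite cos_minus, Hc, Hs. pose proof (sin2_cos2 a) as H. unfold Rsqr in H. lra. }
    destruct (sin_eq_0_0 _ Hsin) as [k Hk].
    destruct (Z.Even_or_Odd k) as [[j ->] | [j ->]].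
    + exists j. rewrite mult_IZR in Hk. lra.
    + exfalso. rewrite plus_IZR, mult_IZR in Hk.
      replace (b - a) with (PI + 2 * PI * IZR j) in Hcos by lra.
      rewrite (proj1 (cos_sin_add_2PI_Z PI j)), cos_PI in Hcos. lra.
Qed.

Lemma cos_sin_double_sign (a b e : R) : e * e = 1 ->
  cos b = e * cos a -> sin b = e * sin a ->
  cos (2 * b) = cos (2 * a) /\ sin (2 * b) = sin (2 * a).
Proof.
  intros He Hc Hs. rewrite !cos_2a, !sin_2a, Hc, Hs. split.
  - transitivity ((e * e) * (cos a * cos a - sin a * sin a)); [ring | rewrite He; ring].
  - transitivity ((e * e) * (2 * sin a * cos a)); [ring | rewrite He; ring].
Qed.

Lemma cos_sin_double_eq (a b : R) :
  cos (2 * b) = cos (2 * a) -> sin (2 * b) = sin (2 * a) ->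
  exists e, (e = 1 \/ e = -1) /\ cos b = e * cos a /\ sin b = e * sin a.
Proof.
  intros Hc Hs. destruct (proj2 (same_angle_iff _ _) (conj Hc Hs)) as [k Hk].
  destruct (Z.Even_or_Odd k) as [[j ->] | [j ->]].
  - exists 1. rewrite mult_IZR in Hk.
    replace b with (a + 2 * PI * IZR j) by lra.
    destruct (cos_sin_add_2PI_Z a j) as [-> ->].
    split; [left; reflexivity | split; ring].
  - exists (-1). rewrite plus_IZR, mult_IZR in Hk.
    replace b with (a + PI + 2 * PI * IZR j) by lra.
    destruct (cos_sin_add_2PI_Z (a + PI) j) as [-> ->].
    rewrite neg_cos, neg_sin. split; [right; reflexivity | split; ring].
Qed.

Lemma sign_sq_cancel (e a : R) : e * e = 1 -> e * (e * a) = a.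
Proof. intro He. rewrite <- Rmult_assoc, He. ring. Qed.

Lemma polar_unique (r1 r2 a b e : R) : 0 < r1 -> 0 < r2 -> e * e = 1 ->
  r1 * cos a = r2 * cos b -> r1 * sin a = e * (r2 * sin b) ->
  r1 = r2 /\ cos a = cos b /\ sin a = e * sin b.
Proof.
  intros H1 H2 He Hc Hs.
  pose proof (sin2_cos2 a) as Ha. pose proof (sin2_cos2 b) as Hb. unfold Rsqr in Ha, Hb.
  assert (Hsq : r1 * r1 = r2 * r2).
  { transitivity ((r1 * cos a) * (r1 * cos a) + (r1 * sin a) * (r1 * sin a)).
    - transitivity (r1 * r1 * (sin a * sin a + cos a * cos a)); [rewrite Ha | ]; ring.
    - rewrite Hc, Hs.
      transitivity (r2 * r2 * (cos b * cos b + (e * e) * (sin b * sin b))); [ring |].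
      rewrite He. transitivity (r2 * r2 * (sin b * sin b + cos b * cos b)); [ring |].
      rewrite Hb; ring. }
  assert (Hr : r1 = r2) by nra. subst r2.
  split; [reflexivity | split; apply (Rmult_eq_reg_l r1); lra].
Qed.

Definition rotate (t a b : R) : R * R := (a * cos t - b * sin t, a * sin t + b * cos t).

Lemma rotate_eq0 (t a b : R) : rotate t a b = (0, 0) -> a = 0 /\ b = 0.
Proof.
  intro H. injection H as H1 H2. pose proof (sin2_cos2 t) as Ht. unfold Rsqr in Ht.
  split.
  - transitivity ((a * cos t - b * sin t) * cos t + (a * sin t + b * cos t) * sin t).
    + transitivity (a * (sin t * sin t + cos t * cos t)); [rewrite Ht |]; ring.
    + rewrite H1, H2. ring.
  - transitivity ((a * sin t + b * cos t) * cos t - (a * cos t - b * sin t) * sin t).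
    + transitivity (b * (sin t * sin t + cos t * cos t)); [rewrite Ht |]; ring.
    + rewrite H1, H2. ring.
Qed.

Lemma rotate_inj (t a b a' b' : R) : rotate t a b = rotate t a' b' -> a = a' /\ b = b'.
Proof.
  intro H. injection H as H1 H2.
  destruct (rotate_eq0 t (a - a') (b - b')) as [Ha Hb].
  - unfold rotate. f_equal; lra.
  - split; lra.
Qed.

Lemma rotate_sign (t t' e a b : R) : cos t' = e * cos t -> sin t' = e * sin t ->
  rotate t' a b = rotate t (e * a) (e * b).
Proof. intros Hc Hs. unfold rotate. rewrite Hc, Hs. f_equal; ring. Qed.

Lemma rotate_polar (t a : R) : rotate t a 0 = (a * cos t, a * sin t).
Proof. unfold rotate. f_equal; ring. Qed.

Lemma rsum_ext (n : nat) (f g : nat -> R) :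
  (forall i, (i < n)%nat -> f i = g i) -> rsum n f = rsum n g.
Proof.
  induction n as [|n IH]; intro H; simpl; [reflexivity |].
  rewrite IH by (intros; apply H; lia). rewrite H by lia. reflexivity.
Qed.

Lemma rsum_plus (n : nat) (f g : nat -> R) :
  rsum n (fun i => f i + g i) = rsum n f + rsum n g.
Proof. induction n as [|n IH]; simpl; [ring | rewrite IH; ring]. Qed.

Lemma rsum_scal (n : nat) (a : R) (f : nat -> R) :
  rsum n (fun i => a * f i) = a * rsum n f.
Proof. induction n as [|n IH]; simpl; [ring | rewrite IH; ring]. Qed.

Lemma rsum_kronecker (n j : nat) (c : nat -> R) : (j < n)%nat ->
  rsum n (fun i => c i * (if Nat.eqb j i then 1 else 0)) = c j.
Proof.
  induction n as [|n IH]; intro Hj; simpl; [lia |].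
  destruct (Nat.eqb_spec j n) as [-> | Hne].
  - rewrite (rsum_ext n _ (fun i => 0 * c i)), rsum_scal; [ring |].
    intros i Hi. destruct (Nat.eqb_spec n i); [lia | ring].
  - rewrite IH by lia. ring.
Qed.

Lemma nat_down_ind (P : nat -> Prop) (m : nat) :
  P m -> (forall k, (k < m)%nat -> P (S k) -> P k) -> forall k, (k <= m)%nat -> P k.
Proof.
  intros Hm Hstep k Hk. remember (m - k)%nat as d eqn:Hd. revert k Hk Hd.
  induction d as [|d IH]; intros k Hk Hd.
  - replace k with m by lia. exact Hm.
  - apply Hstep; [lia |]. apply IH; lia.
Qed.

Lemma forall_lt_double (P : nat -> Prop) (h : nat) :
  (forall q, (q < h)%nat -> P (2 * q)%nat /\ P (2 * q + 1)%nat) ->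
  forall k, (k < 2 * h)%nat -> P k.
Proof.
  intros H k Hk. destruct (Nat.Even_or_Odd k) as [[q ->] | [q ->]]; apply (H q); lia.
Qed.

(** * Partial derivatives and smoothness *)

Definition partial_deriv (f : vec -> R) (i : nat) (x : vec) (l : R) : Prop :=
  derivable_pt_lim (fun t => f (upd x i t)) (x i) l.

Lemma upd_id (x : vec) (i : nat) : upd x i (x i) = x.
Proof.
  apply functional_extensionality. intro k. unfold upd.
  destruct (Nat.eqb_spec k i); congruence.
Qed.

Lemma partial_deriv_const (a : R) i x : partial_deriv (fun _ => a) i x 0.
Proof. apply derivable_pt_lim_const. Qed.

Lemma partial_deriv_coord j i x :
  partial_deriv (fun y => y j) i x (if Nat.eqb j i then 1 else 0).
Proof.
  unfold partial_deriv, upd. destruct (Nat.eqb_spec j i) as [-> |].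
  - apply derivable_pt_lim_id.
  - apply derivable_pt_lim_const.
Qed.

Lemma partial_deriv_plus f g i x l1 l2 :
  partial_deriv f i x l1 -> partial_deriv g i x l2 ->
  partial_deriv (fun y => f y + g y) i x (l1 + l2).
Proof. apply derivable_pt_lim_plus. Qed.

Lemma partial_deriv_mult f g i x l1 l2 :
  partial_deriv f i x l1 -> partial_deriv g i x l2 ->
  partial_deriv (fun y => f y * g y) i x (l1 * g x + f x * l2).
Proof.
  intros H1 H2. pose proof (derivable_pt_lim_mult _ _ _ _ _ H1 H2) as H.
  cbv beta in H. rewrite upd_id in H. exact H.
Qed.

Lemma partial_deriv_comp (phi : R -> R) d f i x l :
  partial_deriv f i x l -> derivable_pt_lim phi (f x) d ->
  partial_deriv (fun y => phi (f y)) i x (d * l).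
Proof.
  intros Hf Hphi. rewrite <- (upd_id x i) in Hphi at 1.
  exact (derivable_pt_lim_comp _ phi _ _ _ Hf Hphi).
Qed.

Lemma cont_n_const n (a : R) : cont_n n (fun _ => a).
Proof.
  intros x eps Heps. exists 1. split; [lra |]. intros y _.
  rewrite Rminus_diag, Rabs_R0. exact Heps.
Qed.

Lemma cont_n_coord n j : (j < n)%nat -> cont_n n (fun y => y j).
Proof. intros Hj x eps Heps. exists eps. split; [exact Heps |]. intros y Hy. apply Hy, Hj. Qed.

Lemma cont_n_plus n f g : cont_n n f -> cont_n n g -> cont_n n (fun y => f y + g y).
Proof.
  intros Hf Hg x eps Heps.
  destruct (Hf x (eps / 2)) as [d1 [Hd1 H1]]; [lra |].
  destruct (Hg x (eps / 2)) as [d2 [Hd2 H2]]; [lra |].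
  exists (Rmin d1 d2). split; [apply Rmin_pos; assumption |]. intros y Hy.
  specialize (H1 y (fun i Hi => Rlt_le_trans _ _ _ (Hy i Hi) (Rmin_l _ _))).
  specialize (H2 y (fun i Hi => Rlt_le_trans _ _ _ (Hy i Hi) (Rmin_r _ _))).
  replace (f y + g y - (f x + g x)) with ((f y - f x) + (g y - g x)) by ring.
  eapply Rle_lt_trans; [apply Rabs_triang | lra].
Qed.

Lemma cont_n_comp n (phi : R -> R) f :
  continuity phi -> cont_n n f -> cont_n n (fun y => phi (f y)).
Proof.
  intros Hphi Hf x eps Heps.
  destruct (Hphi (f x) eps Heps) as [a [Ha Hphia]].
  destruct (Hf x a Ha) as [d [Hd H]].
  exists d. split; [exact Hd |]. intros y Hy.
  destruct (Req_dec (f x) (f y)) as [E | E].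
  - rewrite E, Rminus_diag, Rabs_R0. exact Heps.
  - apply (Hphia (f y)). split; [split; [exact I | exact E] | exact (H y Hy)].
Qed.

Lemma cont_n_mult n f g : cont_n n f -> cont_n n g -> cont_n n (fun y => f y * g y).
Proof.
  intros Hf Hg.
  set (quarter_sq := fun u : R => u * u / 4).
  assert (Hsq : continuity quarter_sq) by (unfold quarter_sq; reg).
  replace (fun y => f y * g y)
    with (fun y => quarter_sq (f y + g y) + - quarter_sq (f y + - g y))
    by (apply functional_extensionality; intro y; unfold quarter_sq; field).
  apply cont_n_plus.
  - apply (cont_n_comp n quarter_sq); [exact Hsq |].
    apply cont_n_plus; assumption.
  - apply (cont_n_comp n Ropp); [reg |].
    apply (cont_n_comp n quarter_sq); [exact Hsq |].
    apply cont_n_plus; [exact Hf | apply (cont_n_comp n Ropp); [reg | exact Hg]].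
Qed.

Lemma Ck_succ_Ck n d f : Ck n (S d) f -> Ck n d f.
Proof.
  revert f. induction d as [|d IH]; intros f [Hc Hd]; [exact Hc |].
  split; [exact Hc |]. intros i Hi.
  destruct (Hd i Hi) as [g [Hg Cg]]. exists g. split; [exact Hg | apply IH, Cg].
Qed.

Lemma Ck_const n d (a : R) : Ck n d (fun _ => a).
Proof.
  revert a. induction d as [|d IH]; intro a; simpl; [apply cont_n_const |].
  split; [apply cont_n_const |]. intros i Hi.
  exists (fun _ => 0). split; [intro x; apply partial_deriv_const | apply IH].
Qed.

Lemma Ck_coord n d j : (j < n)%nat -> Ck n d (fun y => y j).
Proof.
  intro Hj. destruct d; simpl; [apply cont_n_coord, Hj |].
  split; [apply cont_n_coord, Hj |]. intros i Hi.
  eexists. split; [intro x; apply partial_deriv_coord | apply Ck_const].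
Qed.

Lemma Ck_plus n d f g : Ck n d f -> Ck n d g -> Ck n d (fun y => f y + g y).
Proof.
  revert f g. induction d as [|d IH]; intros f g Hf Hg; [apply cont_n_plus; assumption |].
  destruct Hf as [Cf Df], Hg as [Cg Dg]. split; [apply cont_n_plus; assumption |].
  intros i Hi. destruct (Df i Hi) as [f' [Hf' Cf']], (Dg i Hi) as [g' [Hg' Cg']].
  exists (fun y => f' y + g' y). split.
  - intro x. exact (partial_deriv_plus f g i x _ _ (Hf' x) (Hg' x)).
  - apply IH; assumption.
Qed.

Lemma Ck_mult n d f g : Ck n d f -> Ck n d g -> Ck n d (fun y => f y * g y).
Proof.
  revert f g. induction d as [|d IH]; intros f g Hf Hg; [apply cont_n_mult; assumption |].
  pose proof (Ck_succ_Ck _ _ _ Hf) as Ef. pose proof (Ck_succ_Ck _ _ _ Hg) as Eg.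
  destruct Hf as [Cf Df], Hg as [Cg Dg]. split; [apply cont_n_mult; assumption |].
  intros i Hi. destruct (Df i Hi) as [f' [Hf' Cf']], (Dg i Hi) as [g' [Hg' Cg']].
  exists (fun y => f' y * g y + f y * g' y). split.
  - intro x. exact (partial_deriv_mult f g i x _ _ (Hf' x) (Hg' x)).
  - apply Ck_plus; apply IH; assumption.
Qed.

Lemma Ck_opp n d f : Ck n d f -> Ck n d (fun y => - f y).
Proof.
  intro Hf. replace (fun y => - f y) with (fun y => -1 * f y)
    by (apply functional_extensionality; intro; ring).
  apply Ck_mult; [apply Ck_const | exact Hf].
Qed.

Lemma Ck_sin_cos n d f : Ck n d f -> Ck n d (fun y => sin (f y)) /\ Ck n d (fun y => cos (f y)).
Proof.
  revert f. induction d as [|d IH]; intros f Hf.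
  - split; apply cont_n_comp; [reg | exact Hf | reg | exact Hf].
  - destruct (IH f (Ck_succ_Ck _ _ _ Hf)) as [Hsin Hcos].
    destruct Hf as [Hc Hd].
    split; (split; [apply cont_n_comp; [reg | exact Hc] |]);
      intros i Hi; destruct (Hd i Hi) as [f' [Hf' Cf']].
    + exists (fun y => cos (f y) * f' y). split.
      * intro x. exact (partial_deriv_comp sin _ f i x _ (Hf' x) (derivable_pt_lim_sin _)).
      * apply Ck_mult; assumption.
    + exists (fun y => - sin (f y) * f' y). split.
      * intro x. exact (partial_deriv_comp cos _ f i x _ (Hf' x) (derivable_pt_lim_cos _)).
      * apply Ck_mult; [apply Ck_opp |]; assumption.
Qed.

Lemma Ck_rotate n d t a b : Ck n d t -> Ck n d a -> Ck n d b ->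
  Ck n d (fun y => fst (rotate (t y) (a y) (b y))) /\
  Ck n d (fun y => snd (rotate (t y) (a y) (b y))).
Proof.
  intros Ht Ha Hb. destruct (Ck_sin_cos n d t Ht) as [Hs Hc].
  unfold rotate, Rminus; simpl. split.
  - apply Ck_plus; [| apply Ck_opp]; apply Ck_mult; assumption.
  - apply Ck_plus; apply Ck_mult; assumption.
Qed.

(* The immersion clause of [smooth_embedding_K] says that [c = 0] as soon as
   every component of the map has directional derivative 0 along [c]. *)
Section DirectionalDerivative.

Variables (n : nat) (c : nat -> R) (x : vec).

Definition dir_deriv (f : vec -> R) (v : R) : Prop :=
  exists D : nat -> R,
    (forall i, (i < n)%nat -> partial_deriv f i x (D i)) /\ v = rsum n (fun i => c i * D i).

Definition dir_deriv2 (f : vec -> R * R) (v : R * R) : Prop :=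
  dir_deriv (fun y => fst (f y)) (fst v) /\ dir_deriv (fun y => snd (f y)) (snd v).

Lemma dir_deriv_unique f v w : dir_deriv f v -> dir_deriv f w -> v = w.
Proof.
  intros [D [HD ->]] [E [HE ->]]. apply rsum_ext. intros i Hi.
  rewrite (uniqueness_limite _ _ _ _ (HD i Hi) (HE i Hi)). reflexivity.
Qed.

Lemma dir_deriv2_unique f v w : dir_deriv2 f v -> dir_deriv2 f w -> v = w.
Proof.
  intros [Hv1 Hv2] [Hw1 Hw2].
  apply injective_projections; eapply dir_deriv_unique; eassumption.
Qed.

Lemma dir_deriv_eq f v w : dir_deriv f v -> v = w -> dir_deriv f w.
Proof. intros H <-. exact H. Qed.

Lemma dir_deriv_const (a : R) : dir_deriv (fun _ => a) 0.
Proof.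
  exists (fun _ => 0). split; [intros; apply partial_deriv_const |].
  rewrite (rsum_ext n _ (fun i => 0 * c i)), rsum_scal by (intros; ring). ring.
Qed.

Lemma dir_deriv_coord j : (j < n)%nat -> dir_deriv (fun y => y j) (c j).
Proof.
  intro Hj. eexists. split; [intros; apply partial_deriv_coord |].
  symmetry. apply rsum_kronecker, Hj.
Qed.

Lemma dir_deriv_plus f g vf vg :
  dir_deriv f vf -> dir_deriv g vg -> dir_deriv (fun y => f y + g y) (vf + vg).
Proof.
  intros [Df [HDf ->]] [Dg [HDg ->]]. exists (fun i => Df i + Dg i). split.
  - intros i Hi. apply partial_deriv_plus; auto.
  - rewrite <- rsum_plus. apply rsum_ext. intros; ring.
Qed.

Lemma dir_deriv_mult f g vf vg :
  dir_deriv f vf -> dir_deriv g vg ->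
  dir_deriv (fun y => f y * g y) (vf * g x + f x * vg).
Proof.
  intros [Df [HDf ->]] [Dg [HDg ->]]. exists (fun i => Df i * g x + f x * Dg i). split.
  - intros i Hi. apply partial_deriv_mult; auto.
  - rewrite (rsum_ext n (fun i => c i * (Df i * g x + f x * Dg i))
                        (fun i => g x * (c i * Df i) + f x * (c i * Dg i)))
      by (intros; ring).
    rewrite rsum_plus, !rsum_scal. ring.
Qed.

Lemma dir_deriv_comp (phi : R -> R) d f vf :
  dir_deriv f vf -> derivable_pt_lim phi (f x) d ->
  dir_deriv (fun y => phi (f y)) (d * vf).
Proof.
  intros [Df [HDf ->]] Hphi. exists (fun i => d * Df i). split.
  - intros i Hi. apply partial_deriv_comp; auto.
  - rewrite <- rsum_scal. apply rsum_ext. intros; ring.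
Qed.

Lemma dir_deriv_rotate t a b vt va vb :
  dir_deriv t vt -> dir_deriv a va -> dir_deriv b vb ->
  dir_deriv2 (fun y => rotate (t y) (a y) (b y))
    (rotate (t x) (va - vt * b x) (vb + vt * a x)).
Proof.
  intros Ht Ha Hb.
  pose proof (dir_deriv_comp sin _ t vt Ht (derivable_pt_lim_sin _)) as Hs.
  pose proof (dir_deriv_comp cos _ t vt Ht (derivable_pt_lim_cos _)) as Hc.
  unfold rotate, Rminus; split; simpl.
  - eapply dir_deriv_eq.
    + apply dir_deriv_plus; [apply dir_deriv_mult; eassumption |].
      apply (dir_deriv_comp Ropp (-1)); [apply dir_deriv_mult; eassumption |].
      apply derivable_pt_lim_opp, derivable_pt_lim_id.
    + cbv beta; ring.
  - eapply dir_deriv_eq; [apply dir_deriv_plus; apply dir_deriv_mult; eassumption | cbv beta; ring].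
Qed.

End DirectionalDerivative.

(** * The nested torus *)

(* The factor 1/3 keeps [torus_radius] in [1, 3], so that the polar coordinates
   (torus_radius k, x k) can be read off from torus_radius (S k) and
   torus_height k. *)
Fixpoint torus_radius (k : nat) (x : vec) : R :=
  match k with
  | O => 1
  | S k => 2 + torus_radius k x * cos (x k) / 3
  end.

Definition torus_height (k : nat) (x : vec) : R := torus_radius k x * sin (x k).

Lemma torus_radius_bounds k x : 1 <= torus_radius k x <= 3.
Proof.
  induction k as [|k IH]; simpl; [lra |].
  pose proof (COS_bound (x k)). assert (-3 <= torus_radius k x * cos (x k) <= 3) by nra.
  lra.
Qed.

Lemma torus_radius_cos_ext k x y :
  (forall i, (i < k)%nat -> cos (y i) = cos (x i)) -> torus_radius k y = torus_radius k x.
Proof.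
  induction k as [|k IH]; intro H; simpl; [reflexivity |].
  rewrite IH by (intros; apply H; lia). rewrite H by lia. reflexivity.
Qed.

Lemma torus_radius_step_inj k e x y : e * e = 1 ->
  torus_radius (S k) x = torus_radius (S k) y ->
  torus_height k y = e * torus_height k x ->
  torus_radius k x = torus_radius k y /\ cos (y k) = cos (x k) /\ sin (y k) = e * sin (x k).
Proof.
  intros He Hr Hh. simpl in Hr. unfold torus_height in Hh.
  pose proof (torus_radius_bounds k x). pose proof (torus_radius_bounds k y).
  destruct (polar_unique (torus_radius k y) (torus_radius k x) (y k) (x k) e)
    as [-> [Hc Hs]]; auto; lra.
Qed.

Lemma torus_inj_up_to_sign m e x y : e * e = 1 ->
  torus_radius m x = torus_radius m y ->
  (forall k, (k < m)%nat -> torus_height k y = e * torus_height k x) ->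
  forall k, (k < m)%nat -> cos (y k) = cos (x k) /\ sin (y k) = e * sin (x k).
Proof.
  intros He Hm Hh.
  assert (Hr : forall k, (k <= m)%nat -> torus_radius k x = torus_radius k y).
  { apply nat_down_ind; [exact Hm |]. intros k Hk HS.
    exact (proj1 (torus_radius_step_inj k e x y He HS (Hh k Hk))). }
  intros k Hk. apply (torus_radius_step_inj k e x y He); [apply Hr; lia | apply Hh, Hk].
Qed.

Lemma Ck_torus_radius n d k : (k <= n)%nat -> Ck n d (torus_radius k).
Proof.
  induction k as [|k IH]; intro Hk; [exact (Ck_const n d 1) |].
  change (Ck n d (fun y => 2 + torus_radius k y * cos (y k) * / 3)).
  apply Ck_plus; [apply Ck_const |]. apply Ck_mult; [| apply Ck_const].
  apply Ck_mult; [apply IH; lia |]. apply Ck_sin_cos, Ck_coord; lia.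
Qed.

Lemma Ck_torus_height n d k : (k < n)%nat -> Ck n d (torus_height k).
Proof.
  intro Hk. apply Ck_mult; [apply Ck_torus_radius; lia |]. apply Ck_sin_cos, Ck_coord, Hk.
Qed.

Section TorusDirectionalDerivative.

Variables (n : nat) (c : nat -> R) (x : vec).

Lemma dir_deriv_torus_radius_succ k vr : (k < n)%nat ->
  dir_deriv n c x (torus_radius k) vr ->
  dir_deriv n c x (torus_radius (S k))
    ((vr * cos (x k) - c k * torus_radius k x * sin (x k)) / 3).
Proof.
  intros Hk Hr. change (torus_radius (S k)) with (fun y => 2 + torus_radius k y * cos (y k) * / 3).
  eapply dir_deriv_eq.
  - apply dir_deriv_plus; [apply dir_deriv_const |].
    apply dir_deriv_mult; [| apply dir_deriv_const]. apply dir_deriv_mult; [exact Hr |].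
    apply (dir_deriv_comp n c x cos); [apply dir_deriv_coord, Hk | apply derivable_pt_lim_cos].
  - cbv beta. field.
Qed.

Lemma dir_deriv_torus_height k vr : (k < n)%nat ->
  dir_deriv n c x (torus_radius k) vr ->
  dir_deriv n c x (torus_height k) (vr * sin (x k) + c k * torus_radius k x * cos (x k)).
Proof.
  intros Hk Hr. eapply dir_deriv_eq.
  - apply dir_deriv_mult; [exact Hr |].
    apply (dir_deriv_comp n c x sin); [apply dir_deriv_coord, Hk | apply derivable_pt_lim_sin].
  - cbv beta. ring.
Qed.

Lemma dir_deriv_torus_radius_ex k : (k <= n)%nat -> exists vr, dir_deriv n c x (torus_radius k) vr.
Proof.
  induction k as [|k IH]; intro Hk; [exists 0; apply dir_deriv_const |].
  destruct IH as [vr Hr]; [lia |].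
  eexists. apply dir_deriv_torus_radius_succ; [lia | exact Hr].
Qed.

Lemma dir_deriv_torus_height_ex k : (k < n)%nat -> exists vs, dir_deriv n c x (torus_height k) vs.
Proof.
  intro Hk. destruct (dir_deriv_torus_radius_ex k) as [vr Hr]; [lia |].
  eexists. apply dir_deriv_torus_height; [exact Hk | exact Hr].
Qed.

Lemma dir_deriv_torus_step_zero k : (k < n)%nat ->
  dir_deriv n c x (torus_radius (S k)) 0 -> dir_deriv n c x (torus_height k) 0 ->
  dir_deriv n c x (torus_radius k) 0 /\ c k = 0.
Proof.
  intros Hk HS Hh. destruct (dir_deriv_torus_radius_ex k) as [vr Hr]; [lia |].
  pose proof (dir_deriv_unique _ _ _ _ _ _ HS (dir_deriv_torus_radius_succ k vr Hk Hr)) as E1.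
  pose proof (dir_deriv_unique _ _ _ _ _ _ Hh (dir_deriv_torus_height k vr Hk Hr)) as E2.
  destruct (rotate_eq0 (x k) vr (c k * torus_radius k x)) as [Hvr Hck].
  { unfold rotate. f_equal; lra. }
  pose proof (torus_radius_bounds k x).
  split; [rewrite <- Hvr; exact Hr | nra].
Qed.

Lemma dir_deriv_torus_zero m : (m < n)%nat ->
  dir_deriv n c x (torus_radius m) 0 ->
  (forall k, (k < m)%nat -> dir_deriv n c x (torus_height k) 0) ->
  forall k, (k < m)%nat -> c k = 0.
Proof.
  intros Hm Hr Hh.
  assert (Hall : forall k, (k <= m)%nat -> dir_deriv n c x (torus_radius k) 0).
  { apply nat_down_ind; [exact Hr |]. intros k Hk HS.
    apply (dir_deriv_torus_step_zero k); [lia | exact HS | apply Hh, Hk]. }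
  intros k Hk. apply (dir_deriv_torus_step_zero k); [lia | apply Hall; lia | apply Hh, Hk].
Qed.

End TorusDirectionalDerivative.

(** * The embedding of K_n *)

(* With [e = 1], [y] is the same point of the torus as [x]; with [e = -1], it is
   the image of [x] under the involution defining K_(m+1). *)
Definition sign_related (m : nat) (e : R) (x y : vec) : Prop :=
  (forall k, (k < m)%nat -> cos (y k) = cos (x k) /\ sin (y k) = e * sin (x k)) /\
  cos (y m) = e * cos (x m) /\ sin (y m) = e * sin (x m).

Lemma K_equiv_iff_sign_related m x y :
  K_equiv (m + 1) x y <-> sign_related m 1 x y \/ sign_related m (-1) x y.
Proof.
  unfold K_equiv, sign_related. replace (m + 1 - 1)%nat with m by lia.
  setoid_rewrite same_angle_iff. setoid_rewrite cos_neg. setoid_rewrite sin_neg.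
  rewrite neg_cos, neg_sin. setoid_rewrite Rmult_1_l.
  split.
  - intros [H | [H [Hc Hs]]]; [left | right].
    + split; [intros k Hk; apply H; lia | apply H; lia].
    + split; [| split; [rewrite Hc | rewrite Hs]; ring].
      intros k Hk. destruct (H k Hk) as [Hck Hsk]. rewrite Hsk. split; [exact Hck | ring].
  - intros [[H [Hc Hs]] | [H [Hc Hs]]]; [left | right].
    + intros k Hk. destruct (Nat.eq_dec k m) as [-> | Hne]; [split; assumption |].
      apply H; lia.
    + split; [| split; [rewrite Hc | rewrite Hs]; ring].
      intros k Hk. destruct (H k Hk) as [Hck Hsk]. rewrite Hsk. split; [exact Hck | ring].
Qed.

(* The p-th complex coordinate of the embedding; [Kn_embedding] lists the real
   and imaginary parts of these coordinates in turn. *)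
Definition Kn_plane (m : nat) (x : vec) (p : nat) : R * R :=
  match p with
  | O => rotate (2 * x m) (torus_radius m x) 0
  | S p => rotate (x m) (torus_height (2 * p) x) (torus_height (2 * p + 1) x)
  end.

Definition Kn_embedding (m : nat) (x : vec) (j : nat) : R :=
  if Nat.odd j then snd (Kn_plane m x (Nat.div2 j)) else fst (Kn_plane m x (Nat.div2 j)).

Section Embedding.

Variable h : nat.

Local Notation m := (2 * h)%nat.
Local Notation n := (2 * h + 1)%nat.

Lemma div2_le_of_lt j : (j < n + 1)%nat -> (Nat.div2 j <= h)%nat.
Proof. intro Hj. pose proof (Nat.div2_odd j). lia. Qed.

Lemma Kn_embedding_even x p : Kn_embedding m x (2 * p) = fst (Kn_plane m x p).
Proof. unfold Kn_embedding. rewrite Nat.odd_even, Nat.div2_double. reflexivity. Qed.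

Lemma Kn_embedding_odd x p : Kn_embedding m x (2 * p + 1) = snd (Kn_plane m x p).
Proof.
  unfold Kn_embedding. rewrite Nat.odd_odd, Nat.div2_odd'. reflexivity.
Qed.

Lemma Kn_embedding_eq_iff x y :
  (forall j, (j < n + 1)%nat -> Kn_embedding m x j = Kn_embedding m y j) <->
  (forall p, (p <= h)%nat -> Kn_plane m x p = Kn_plane m y p).
Proof.
  split.
  - intros H p Hp. apply injective_projections.
    + rewrite <- !Kn_embedding_even. apply H. lia.
    + rewrite <- !Kn_embedding_odd. apply H. lia.
  - intros H j Hj. unfold Kn_embedding. rewrite H by (apply div2_le_of_lt, Hj). reflexivity.
Qed.

Lemma Kn_plane_sign_related e x y : e * e = 1 -> sign_related m e x y ->
  forall p, (p <= h)%nat -> Kn_plane m x p = Kn_plane m y p.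
Proof.
  intros He [Hlow [Hc Hs]].
  assert (Hr : torus_radius m y = torus_radius m x)
    by (apply torus_radius_cos_ext; intros; apply Hlow; assumption).
  assert (Hh : forall k, (k < m)%nat -> torus_height k y = e * torus_height k x).
  { intros k Hk. unfold torus_height.
    rewrite (torus_radius_cos_ext k x y) by (intros; apply Hlow; lia).
    rewrite (proj2 (Hlow k Hk)). ring. }
  intros [|p] Hp; cbn [Kn_plane].
  - destruct (cos_sin_double_sign (x m) (y m) e He Hc Hs) as [Hc2 Hs2].
    unfold rotate. rewrite Hr, Hc2, Hs2. reflexivity.
  - rewrite (rotate_sign (x m) (y m) e _ _ Hc Hs), !Hh by lia.
    rewrite !sign_sq_cancel by exact He. reflexivity.
Qed.

Lemma sign_related_of_Kn_plane x y :
  (forall p, (p <= h)%nat -> Kn_plane m x p = Kn_plane m y p) ->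
  exists e, (e = 1 \/ e = -1) /\ sign_related m e x y.
Proof.
  intro H.
  pose proof (H O ltac:(lia)) as H0. cbn [Kn_plane] in H0. rewrite !rotate_polar in H0.
  injection H0 as Hc0 Hs0.
  assert (Hpos : 0 < torus_radius m x /\ 0 < torus_radius m y).
  { pose proof (torus_radius_bounds m x). pose proof (torus_radius_bounds m y). lra. }
  rewrite <- (Rmult_1_l (torus_radius m y * sin _)) in Hs0.
  destruct (polar_unique _ _ _ _ 1 (proj1 Hpos) (proj2 Hpos) (Rmult_1_l 1) Hc0 Hs0)
    as [Hr [Hc2 Hs2]].
  rewrite Rmult_1_l in Hs2.
  destruct (cos_sin_double_eq (x m) (y m) (eq_sym Hc2) (eq_sym Hs2)) as [e [He [Hc Hs]]].
  assert (Hee : e * e = 1) by (destruct He as [-> | ->]; ring).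
  exists e. split; [exact He |]. split; [| split; assumption].
  apply (torus_inj_up_to_sign m e x y Hee Hr). apply forall_lt_double.
  intros q Hq. pose proof (H (S q) ltac:(lia)) as Hq'. cbn [Kn_plane] in Hq'.
  rewrite (rotate_sign (x m) (y m) e _ _ Hc Hs) in Hq'.
  destruct (rotate_inj _ _ _ _ _ Hq') as [Ha Hb].
  rewrite Ha, Hb, !sign_sq_cancel by exact Hee. split; reflexivity.
Qed.

Lemma Kn_embedding_K_equiv x y :
  K_equiv n x y <-> forall j, (j < n + 1)%nat -> Kn_embedding m x j = Kn_embedding m y j.
Proof.
  rewrite K_equiv_iff_sign_related, Kn_embedding_eq_iff. split.
  - intros [Hxy | Hxy]; eapply Kn_plane_sign_related; try exact Hxy; ring.
  - intro H. destruct (sign_related_of_Kn_plane x y H) as [e [[-> | ->] Hxy]]; auto.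
Qed.

Lemma Kn_embedding_smooth j : (j < n + 1)%nat -> smooth_n n (fun x => Kn_embedding m x j).
Proof.
  intro Hj. split.
  - (* agreeing on the first n coordinates is a special case of [K_equiv] *)
    intros x y Hxy. apply Kn_embedding_K_equiv; [| exact Hj].
    apply K_equiv_iff_sign_related. left.
    split; [intros k Hk | ]; rewrite !Hxy by lia; split; ring.
  - intro d. pose proof (div2_le_of_lt j Hj) as Hp. unfold Kn_embedding.
    assert (Hplane : Ck n d (fun x => fst (Kn_plane m x (Nat.div2 j))) /\
                     Ck n d (fun x => snd (Kn_plane m x (Nat.div2 j)))).
    { destruct (Nat.div2 j) as [|p].
      - apply Ck_rotate; [apply Ck_mult; [apply Ck_const | apply Ck_coord; lia] |
                          apply Ck_torus_radius; lia | apply Ck_const].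
      - apply Ck_rotate; [apply Ck_coord | apply Ck_torus_height | apply Ck_torus_height]; lia. }
    destruct (Nat.odd j); apply Hplane.
Qed.

Section Immersion.

Variables (c : nat -> R) (x : vec).

Lemma dir_deriv2_Kn_plane p : (p <= h)%nat ->
  (forall j, (j < n + 1)%nat -> dir_deriv n c x (fun y => Kn_embedding m y j) 0) ->
  dir_deriv2 n c x (fun y => Kn_plane m y p) (0, 0).
Proof.
  intros Hp HF. split.
  - pose proof (HF (2 * p)%nat ltac:(lia)) as H.
    unfold Kn_embedding in H. rewrite Nat.odd_even, Nat.div2_double in H. exact H.
  - pose proof (HF (2 * p + 1)%nat ltac:(lia)) as H.
    unfold Kn_embedding in H. rewrite Nat.odd_odd, Nat.div2_odd' in H. exact H.
Qed.

Lemma Kn_plane0_dir_deriv_zero :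
  dir_deriv2 n c x (fun y => Kn_plane m y 0) (0, 0) ->
  c m = 0 /\ dir_deriv n c x (torus_radius m) 0.
Proof.
  intro H0. destruct (dir_deriv_torus_radius_ex n c x m) as [vr Hr]; [lia |].
  assert (H2theta : dir_deriv n c x (fun y => 2 * y m) (2 * c m)).
  { eapply dir_deriv_eq.
    - apply dir_deriv_mult; [apply dir_deriv_const | apply dir_deriv_coord; lia].
    - cbv beta; ring. }
  destruct (rotate_eq0 _ _ _ (dir_deriv2_unique _ _ _ _ _ _
      (dir_deriv_rotate _ _ _ _ _ _ _ _ _ H2theta Hr (dir_deriv_const n c x 0)) H0))
    as [Hvr Hcm].
  pose proof (torus_radius_bounds m x).
  split; [nra | apply (dir_deriv_eq _ _ _ _ _ _ Hr); lra].
Qed.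

Lemma Kn_plane_succ_dir_deriv_zero q : (q < h)%nat -> c m = 0 ->
  dir_deriv2 n c x (fun y => Kn_plane m y (S q)) (0, 0) ->
  dir_deriv n c x (torus_height (2 * q)) 0 /\ dir_deriv n c x (torus_height (2 * q + 1)) 0.
Proof.
  intros Hq Hcm H.
  destruct (dir_deriv_torus_height_ex n c x (2 * q)) as [va Ha]; [lia |].
  destruct (dir_deriv_torus_height_ex n c x (2 * q + 1)) as [vb Hb]; [lia |].
  assert (Htheta : dir_deriv n c x (fun y => y m) 0).
  { rewrite <- Hcm. apply dir_deriv_coord. lia. }
  destruct (rotate_eq0 _ _ _ (dir_deriv2_unique _ _ _ _ _ _
      (dir_deriv_rotate _ _ _ _ _ _ _ _ _ Htheta Ha Hb) H)) as [Ea Eb].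
  split; [apply (dir_deriv_eq _ _ _ _ _ _ Ha) | apply (dir_deriv_eq _ _ _ _ _ _ Hb)]; lra.
Qed.

Lemma Kn_embedding_immersion :
  (forall j, (j < n + 1)%nat -> dir_deriv n c x (fun y => Kn_embedding m y j) 0) ->
  forall i, (i < n)%nat -> c i = 0.
Proof.
  intros HF i Hi.
  destruct (Kn_plane0_dir_deriv_zero (dir_deriv2_Kn_plane 0 ltac:(lia) HF)) as [Hcm Hr].
  destruct (Nat.eq_dec i m) as [-> | Hne]; [exact Hcm |].
  apply (dir_deriv_torus_zero n c x m); [lia | exact Hr | | lia].
  apply forall_lt_double. intros q Hq.
  apply Kn_plane_succ_dir_deriv_zero; [exact Hq | exact Hcm |].
  apply dir_deriv2_Kn_plane; [lia | exact HF].
Qed.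

End Immersion.

End Embedding.

Theorem mainTheorem12 (n : nat) (Hodd : Nat.Odd n) :
  exists F : vec -> vec, smooth_embedding_K n F.
Proof.
  destruct Hodd as [h ->]. exists (Kn_embedding (2 * h)).
  split; [| split; [| split]].
  - apply Kn_embedding_smooth.
  - intros x y Hxy. apply Kn_embedding_K_equiv, Hxy.
  - intros x y Hxy. apply Kn_embedding_K_equiv, Hxy.
  - intros x D HD c Hc. apply (Kn_embedding_immersion h c x).
    intros j Hj. exists (D j). split.
    + intros i Hi. exact (HD j i Hj Hi).
    + symmetry. exact (Hc j Hj).
Qed.
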